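(* Let $H$ be a strictly $2$-balanced graph with $h$ vertices and $k$ edges. For $n\ge h$ let $G^H$ be the $k$-uniform hypergraph whose vertex set is the edge set of $K_n$ and whose hyperedges are the $k$-sets of edges of $K_n$ forming a copy of $H$. Let $\Delta=\frac{2k\,(n-2)_{h-2}}{|\mathrm{Aut}(H)|}$. Then (1) $G^H$ is $\Delta$-regular; (2) for each $\ell\in\{2,\dots,k-1\}$, $\Delta_\ell(G^H)=o\left(\Delta^{\frac{k-\ell}{k-1}}\right)$ as $n\to\infty$; (3) $\Gamma(G^H)=o(\Delta)$.
   Context: $m_2(H)=\max_{F\subseteq H,|V(F)|\ge3}\frac{|E(F)|-1}{|V(F)|-2}$; $H$ (with $|E(H)|\ge3$) is strictly $2$-balanced if the maximum is attained uniquely at $F=H$. $(n)_j=n(n-1)\cdots(n-j+1)$. For a hypergraph $G$, $\Delta_\ell(G)=\max_{|S|=\ell}|\{e\in E(G):S\subseteq e\}|$, and $\Gamma(G)$ is the maximum over distinct vertices $v,v'$ of the number of $(k-1)$-sets $S$ of vertices with $S\cup\{v\}$ and $S\cup\{v'\}$ both hyperedges. *)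

From Stdlib Require Import Reals.
From mathcomp Require Import all_boot all_order all_algebra all_fingroup.
Set Implicit Arguments. Unset Strict Implicit. Unset Printing Implicit Defensive.

Section GH.
Variables (V : finType) (E : {set {set V}}).

(* A graph H: vertex set V (h = #|V|), edge set E of 2-subsets (k = #|E|). *)
Definition is_graph : Prop := forall e, e \in E -> #|e| = 2.

Definition dens2 (W : {set V}) (D : {set {set V}}) : rat :=
  ((#|D|%:Q - 1) / (#|W|%:Q - 2))%R.

Definition strictly_2_balanced : Prop :=
  3 <= #|E| /\
  forall (W : {set V}) (D : {set {set V}}),
    D \subset E -> (forall e, e \in D -> e \subset W) -> 3 <= #|W| ->
    (W, D) <> (setT, E) -> (dens2 W D < dens2 setT E)%R.

Definition aut_card : nat := #|[set s : {perm V} | [set s @: e | e : {set V} in E] == E]|.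

Definition Kedges (n : nat) : {set {set 'I_n}} := [set e : {set 'I_n} | #|e| == 2].

Definition GH_edges (n : nat) : {set {set {set 'I_n}}} :=
  [set S | [exists f : {ffun V -> 'I_n}, injectiveb f && (S == [set f @: e | e : {set V} in E])]].

Definition GH_deg (n : nat) (x : {set 'I_n}) : nat := #|[set S in GH_edges n | x \in S]|.

Definition GH_maxdeg (l n : nat) : nat :=
  \max_(S in [set S : {set {set 'I_n}} | (S \subset Kedges n) && (#|S| == l)])
     #|[set T in GH_edges n | S \subset T]|.

Definition GH_Gamma (n : nat) : nat :=
  \max_(p : {set 'I_n} * {set 'I_n} |
          [&& p.1 \in Kedges n, p.2 \in Kedges n & p.1 != p.2])
     #|[set S : {set {set 'I_n}} |
          [&& S \subset Kedges n, #|S| == #|E|.-1,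
              (S :|: [set p.1]) \in GH_edges n & (S :|: [set p.2]) \in GH_edges n]]|.

Definition GH_Delta (n : nat) : R :=
  Rdiv (INR (2 * #|E| * (n - 2) ^_ (#|V| - 2))) (INR aut_card).

End GH.

Definition little_o (f g : nat -> R) : Prop :=
  forall eps : R, Rlt 0 eps -> exists N : nat, forall n : nat, (N <= n)%N ->
    Rle (Rabs (f n)) (Rmult eps (Rabs (g n))).

(** Copies of H in K_n are images of injections V -> 'I_n, each copy being the image
   of exactly |Aut(H)| of them.  An injection sends one of the k edges of H onto a
   given edge x of K_n in 2 (n-2)_{h-2} ways, whence the regularity.

   If a copy contains l given edges of K_n, the injection sends at least h - beta_l
   vertices into the at most 2l vertices they cover, where beta_l is the largest
   number of vertices of H missed by l of its edges; there are O(n^beta_l) such maps.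
   Strict 2-balancedness applied to the subgraph spanned by l edges gives
   beta_l (k-1) < (h-2)(k-l), so O(n^beta_l) = o(Delta^((k-l)/(k-1))) as
   Delta = Theta(n^(h-2)).  For Gamma, strict 2-balancedness forces minimum degree
   two, so when S ∪ {x} and S ∪ {x'} are both copies, S ∪ {x} covers the at least
   three vertices of x and x'; this leaves O(n^(h-3)) = o(Delta) choices. *)

From Stdlib Require Import Reals Lra.
From mathcomp Require Import all_boot all_order all_algebra all_fingroup.
From mathcomp Require Import zify.

Set Implicit Arguments. Unset Strict Implicit. Unset Printing Implicit Defensive.
Import GRing.Theory Num.Theory.

Lemma card_setU_card2 (T : finType) (e1 e2 : {set T}) :
  #|e1| = 2 -> #|e2| = 2 -> e1 != e2 -> 3 <= #|e1 :|: e2| <= 4.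
Proof.
move=> e1_2 e2_2 e12; rewrite cardsU e1_2 e2_2.
suff : #|e1 :&: e2| <= 1 by lia.
rewrite leqNgt; apply: contra e12 => big_meet.
have <- : e1 :&: e2 = e1 by apply/eqP; rewrite eqEcard subsetIl e1_2.
by rewrite eqEcard subsetIr e2_2.
Qed.

Lemma card_setU_card2_meet (T : finType) (e1 e2 : {set T}) :
  #|e1| = 2 -> #|e2| = 2 -> e1 :&: e2 != set0 -> #|e1 :|: e2| <= 3.
Proof.
move=> e1_2 e2_2; rewrite -card_gt0 cardsU e1_2 e2_2; lia.
Qed.

Lemma ltn_cross_of_ratio (d w k h : nat) : 1 <= d -> 3 <= w -> 3 <= h -> 1 <= k ->
  ((d%:Q - 1) / (w%:Q - 2) < (k%:Q - 1) / (h%:Q - 2))%R ->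
  (d - 1) * (h - 2) < (k - 1) * (w - 2).
Proof.
move=> d1 w3 h3 k1.
have natrBn j m : j <= m -> (m%:R - j%:R = (m - j)%N%:R :> rat)%R.
  by move=> jm; rewrite natrB.
rewrite -!pmulrn !(natrBn 1) ?(natrBn 2) //; try lia.
have w0 : (0 < (w - 2)%N%:R :> rat)%R by rewrite ltr0n; lia.
have h0 : (0 < (h - 2)%N%:R :> rat)%R by rewrite ltr0n; lia.
rewrite ltr_pdivrMr // mulrAC ltr_pdivlMr // -!natrM ltr_nat.
by rewrite mulnC [X in _ < X]mulnC.
Qed.

Section StrictlyBalanced.
Variables (V : finType) (E : {set {set V}}).
Hypothesis graphE : is_graph E.
Hypothesis balE : strictly_2_balanced E.

Lemma card_edges_ge3 : 3 <= #|E|.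
Proof. exact: balE.1. Qed.

Lemma card_span_ge3 (W : {set V}) (D : {set {set V}}) : D \subset E -> 1 < #|D| ->
  (forall e, e \in D -> e \subset W) -> 3 <= #|W|.
Proof.
move=> sDE /card_gt1P [e1 [e2 [De1 De2 e12]]] sW.
have /andP [+ _] :=
  card_setU_card2 (graphE (subsetP sDE _ De1)) (graphE (subsetP sDE _ De2)) e12.
by move/leq_trans; apply; apply: subset_leq_card; rewrite subUset !sW.
Qed.

Lemma card_vertices_ge3 : 3 <= #|V|.
Proof.
rewrite -cardsT; apply: (@card_span_ge3 _ E) => //.
by have := card_edges_ge3; lia.
Qed.

Lemma proper_subgraph_density_lt (W : {set V}) (D : {set {set V}}) : D \subset E ->
  (forall e, e \in D -> e \subset W) -> 3 <= #|W| -> (W, D) <> (setT, E) ->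
  1 <= #|D| -> (#|D| - 1) * (#|V| - 2) < (#|E| - 1) * (#|W| - 2).
Proof.
move=> sDE sW W3 WD_proper D1.
have := balE.2 W D sDE sW W3 WD_proper; rewrite /dens2 cardsT.
apply: ltn_cross_of_ratio => //; first exact: card_vertices_ge3.
by have := card_edges_ge3; lia.
Qed.

Lemma edge_pair_density_lt (e1 e2 : {set V}) : e1 \in E -> e2 \in E -> e1 != e2 ->
  #|V| - 2 < (#|E| - 1) * (#|e1 :|: e2| - 2).
Proof.
move=> Ee1 Ee2 e12; have pair2 : #|[set e1; e2]| = 2 by rewrite cards2 e12.
have := @proper_subgraph_density_lt (e1 :|: e2) [set e1; e2].
rewrite pair2 mul1n; apply=> //.
- by apply/subsetP => e /set2P [] ->.
- by move=> e /set2P [] ->; [exact: subsetUl | exact: subsetUr].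
- by have /andP [] := card_setU_card2 (graphE Ee1) (graphE Ee2) e12.
- by case=> _ EE; have := card_edges_ge3; rewrite -EE pair2.
Qed.

Lemma vertex_in_edge v : exists2 e, e \in E & v \in e.
Proof.
apply/exists_inP; apply: contraT => /exists_inPn v_isolated.
have sW e : e \in E -> e \subset [set~ v].
  move=> Ee; apply/subsetP => w we; rewrite !inE; apply: contraNneq (v_isolated e Ee).
  by move=> <-.
have W3 : 3 <= #|[set~ v]| by apply: (@card_span_ge3 _ E) => //; have := card_edges_ge3; lia.
have W_proper : ([set~ v], E) <> (setT, E) by case=> /setP /(_ v); rewrite !inE eqxx.
have := proper_subgraph_density_lt (subxx _) sW W3 W_proper.
rewrite cardsC1 in W3 *; have := card_edges_ge3; have := card_vertices_ge3; nia.
Qed.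

(* Strict 2-balancedness forces minimum degree two: deleting an isolated edge with
   its endpoints, or a vertex of degree one, would leave a subgraph of 2-density at
   least (k-1)/(h-2). *)
Lemma edge_meets_other_edge e0 : e0 \in E ->
  exists2 e1, e1 \in E & (e1 != e0) && (e0 :&: e1 != set0).
Proof.
move=> Ee0; apply/exists_inP; apply: contraT => /exists_inPn e0_isolated.
have k3 := card_edges_ge3; have h3 := card_vertices_ge3.
have sW e : e \in E :\ e0 -> e \subset ~: e0.
  rewrite !inE => /andP [ee0 Ee]; apply/subsetP => w we; rewrite inE.
  apply: contraNN (e0_isolated e Ee) => we0; rewrite ee0 /=.
  by apply/set0Pn; exists w; rewrite inE we0.
have cardD : #|E :\ e0| = #|E| - 1 by rewrite (cardsD1 e0 E) Ee0; lia.
have cardW : #|~: e0| = #|V| - 2 by rewrite cardsCs setCK (graphE Ee0).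
have D2 : 1 < #|E :\ e0| by lia.
have W3 : 3 <= #|~: e0| by apply: (card_span_ge3 (subD1set E e0)).
have W_proper : (~: e0, E :\ e0) <> (setT, E).
  by case=> _ /setP /(_ e0); rewrite !inE eqxx Ee0.
have := proper_subgraph_density_lt (subD1set E e0) sW W3 W_proper.
rewrite cardD cardW => /(_ ltac:(lia)) density_lt.
move: D2 => /card_gt1P [e1 [e2 [+ + e12]]]; rewrite !inE => /andP [_ Ee1] /andP [_ Ee2].
have := edge_pair_density_lt Ee1 Ee2 e12.
have := card_setU_card2 (graphE Ee1) (graphE Ee2) e12; nia.
Qed.

Lemma vertex_in_other_edge v e0 : e0 \in E -> v \in e0 ->
  exists2 e, e \in E & (e != e0) && (v \in e).
Proof.
move=> Ee0 ve0; apply/exists_inP; apply: contraT => /exists_inPn v_leaf.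
have k3 := card_edges_ge3; have h3 := card_vertices_ge3.
have [e1 Ee1 /andP [e10 e0e1]] := edge_meets_other_edge Ee0.
have sW e : e \in E :\ e0 -> e \subset [set~ v].
  rewrite !inE => /andP [ee0 Ee]; apply/subsetP => w we; rewrite !inE.
  by apply: contraNneq (v_leaf e Ee) => wv; rewrite ee0 -wv.
have cardD : #|E :\ e0| = #|E| - 1 by rewrite (cardsD1 e0 E) Ee0; lia.
have W3 : 3 <= #|[set~ v]| by apply: (card_span_ge3 (subD1set E e0)) => //; lia.
have W_proper : ([set~ v], E :\ e0) <> (setT, E) by case=> /setP /(_ v); rewrite !inE eqxx.
have := proper_subgraph_density_lt (subD1set E e0) sW W3 W_proper.
rewrite cardD cardsC1 => /(_ ltac:(lia)) density_lt.
have := edge_pair_density_lt Ee0 Ee1 (ltac:(by rewrite eq_sym)).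
have := card_setU_card2_meet (graphE Ee0) (graphE Ee1) e0e1; nia.
Qed.

End StrictlyBalanced.

Section InjectionsWithPrescribedValues.
Variables (V : finType) (n : nat).
Local Notation FF := {ffun V -> 'I_n}.

Definition perm_ffun (s : {perm 'I_n}) (f : FF) : FF := [ffun w => s (f w)].

Lemma perm_ffun_inj s : injective (perm_ffun s).
Proof.
move=> f g /ffunP fg; apply/ffunP => w.
by have := fg w; rewrite !ffunE => /perm_inj.
Qed.

Lemma injectiveb_perm_ffun s f : injectiveb (perm_ffun s f) = injectiveb f.
Proof.
apply/injectiveP/injectiveP => f_inj x y.
- by move=> fxy; apply: f_inj; rewrite !ffunE fxy.
- by rewrite !ffunE => /perm_inj /f_inj.
Qed.

Lemma card_le_perm_ffun (A B : {set FF}) s :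
  (forall f, f \in A -> perm_ffun s f \in B) -> #|A| <= #|B|.
Proof.
move=> AB; rewrite -(card_imset _ (@perm_ffun_inj s)); apply: subset_leq_card.
by apply/subsetP => _ /imsetP [f Af ->]; apply: AB.
Qed.

Variables (u v : V).

Definition inj_at a := [set f : FF | injectiveb f && (f u == a)].
Definition inj_at2 a b := [set f : FF | injectiveb f && (f u == a) && (f v == b)].

Lemma card_inj_at_le a a' : #|inj_at a| <= #|inj_at a'|.
Proof.
apply: (@card_le_perm_ffun _ _ (tperm a a')) => f.
rewrite !inE injectiveb_perm_ffun ffunE => /andP [-> /eqP fu].
by rewrite fu tpermL eqxx.
Qed.

Lemma card_inj_at a : #|inj_at a| = n.-1 ^_ #|V|.-1.
Proof.
have n0 : 0 < n by case: a => a /=; lia.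
have V0 : 0 < #|V| by apply/card_gt0P; exists u.
have : \sum_(a' : 'I_n) #|inj_at a'| = n * #|inj_at a|.
  rewrite (eq_bigr (fun _ => #|inj_at a|)) ?sum_nat_const ?card_ord // => a' _.
  by apply/eqP; rewrite eqn_leq !card_inj_at_le.
have -> : \sum_(a' : 'I_n) #|inj_at a'| = #|[set f : FF | injectiveb f]|.
  rewrite -sum1_card (partition_big (fun f : FF => f u) predT) //.
  by apply: eq_bigr => a' _; rewrite -sum1_card; apply: eq_bigl => f; rewrite !inE.
rewrite card_inj_ffuns card_ord; case: #|V| V0 => // m _.
by rewrite ffactnS => /eqP; rewrite eqn_pmul2l // => /eqP.
Qed.

Hypothesis uv : u != v.

Lemma card_inj_at2_le a b b' : b != a -> b' != a -> #|inj_at2 a b| <= #|inj_at2 a b'|.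
Proof.
move=> ba b'a; apply: (@card_le_perm_ffun _ _ (tperm b b')) => f.
rewrite !inE injectiveb_perm_ffun !ffunE => /andP [/andP [-> /eqP fu] /eqP fv].
by rewrite fu fv tpermL tpermD ?eqxx // eq_sym.
Qed.

Lemma card_inj_at2 a b : b != a -> #|inj_at2 a b| = n.-2 ^_ #|V|.-2.
Proof.
move=> ba.
have n1 : 1 < n by rewrite -[n]card_ord; apply/card_gt1P; exists a, b; rewrite eq_sym.
have V1 : 1 < #|V| by apply/card_gt1P; exists u, v.
have inj_at2_diag : #|inj_at2 a a| = 0.
  apply/eqP; rewrite cards_eq0; apply/eqP/setP => f; rewrite !inE.
  apply/negP => /andP [/andP [/injectiveP f_inj /eqP fu] /eqP fv].
  by move: uv; rewrite (f_inj u v) ?eqxx // fu fv.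
have : \sum_(b' : 'I_n) #|inj_at2 a b'| = #|inj_at a|.
  rewrite -sum1_card (partition_big (fun f : FF => f v) predT) //.
  by apply: eq_bigr => b' _; rewrite -sum1_card; apply: eq_bigl => f; rewrite !inE.
rewrite (bigD1 a) //= inj_at2_diag add0n.
rewrite (eq_bigr (fun _ => #|inj_at2 a b|)) ?sum_nat_const ?cardC1 ?card_ord; last first.
  by move=> b' b'a; apply/eqP; rewrite eqn_leq !card_inj_at2_le.
rewrite card_inj_at; case: #|V| V1 => // [[|m]] // _.
by rewrite /= ffactnS => /eqP; rewrite eqn_pmul2l; [move/eqP | lia].
Qed.

End InjectionsWithPrescribedValues.

Lemma eq_set2 (T : finType) (p q a b : T) : a != b ->
  ([set p; q] == [set a; b]) = ((p == a) && (q == b)) || ((p == b) && (q == a)).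
Proof.
move=> ab; apply/idP/idP; last first.
  by case/orP => /andP [/eqP -> /eqP ->] //; rewrite setUC.
move/eqP/setP => pq_ab; have := pq_ab a; have := pq_ab b; have := pq_ab p.
rewrite !inE !eqxx /= ?orbT => /esym /orP [] /eqP pE; subst p.
- by case/orP => [/eqP ba | /eqP -> _]; [rewrite ba eqxx in ab | rewrite !eqxx].
- by move=> _ /orP [/eqP ab' | /eqP ->]; [rewrite ab' eqxx in ab | rewrite !eqxx orbT].
Qed.

Lemma card_sum_indicator (T : finType) (A : {pred T}) : #|A| = \sum_x (x \in A : nat).
Proof. by rewrite -sum1_card big_mkcond. Qed.

Section Copies.
Variables (V : finType) (E : {set {set V}}) (n : nat).
Local Notation FF := {ffun V -> 'I_n}.

Definition copy (f : FF) : {set {set 'I_n}} := [set f @: e | e : {set V} in E].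

Lemma GH_edgesP S : reflect (exists2 f : FF, injective f & S = copy f) (S \in GH_edges E n).
Proof.
rewrite inE; apply: (iffP existsP) => [[f /andP [/injectiveP f_inj /eqP ->]] | [f f_inj ->]].
  by exists f.
by exists f; rewrite eqxx andbT; apply/injectiveP.
Qed.

Lemma card_copy (f : FF) : injective f -> #|copy f| = #|E|.
Proof. by move=> f_inj; rewrite card_imset //; apply: imset_inj. Qed.

Lemma card_inj_image_card2 (e : {set V}) (x : {set 'I_n}) : #|e| = 2 -> #|x| = 2 ->
  #|[set f : FF | injectiveb f && (f @: e == x)]| = 2 * n.-2 ^_ #|V|.-2.
Proof.
move=> /eqP /cards2P [u [v [uv ->]]] /eqP /cards2P [a [b [ab ->]]].
have -> : [set f : FF | injectiveb f && (f @: [set u; v] == [set a; b])] =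
          inj_at2 u v a b :|: inj_at2 u v b a.
  apply/setP => f; rewrite !inE imsetU1 imset_set1 eq_set2 //.
  by case: (injectiveb f); rewrite /= ?andbA.
rewrite cardsU !card_inj_at2 // 1?eq_sym //.
suff -> : inj_at2 u v a b :&: inj_at2 u v b a = set0 by rewrite cards0; lia.
apply/setP => f; rewrite !inE.
apply/negP => /andP [/andP [/andP [_ /eqP fa] _] /andP [/andP [_ /eqP fb] _]].
by move: ab; rewrite -fa fb eqxx.
Qed.

Lemma card_inj_copy_mem (x : {set 'I_n}) : is_graph E -> #|x| = 2 ->
  #|[set f : FF | injectiveb f && (x \in copy f)]| = #|E| * (2 * n.-2 ^_ #|V|.-2).
Proof.
move=> graphE x2.
transitivity (\sum_(e in E) #|[set f : FF | injectiveb f && (f @: e == x)]|); last first.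
  rewrite (eq_bigr (fun _ => 2 * n.-2 ^_ #|V|.-2)) ?sum_nat_const // => e Ee.
  by apply: card_inj_image_card2 x2; apply: graphE.
under eq_bigr do rewrite card_sum_indicator.
rewrite card_sum_indicator exchange_big /=; apply: eq_bigr => f _; rewrite inE.
have [f_injb | /negbTE not_inj] := boolP (injectiveb f); last first.
  by rewrite big1 // => e _; rewrite inE not_inj.
have /injectiveP f_inj := f_injb.
have [/imsetP [e0 Ee0 ->] | x_notin] := boolP (x \in copy f).
- rewrite (bigD1 e0) //= inE eqxx f_injb big1 // => e /andP [Ee ee0].
  by rewrite inE (inj_eq (imset_inj f_inj)) (negbTE ee0) andbF.
- rewrite big1 // => e Ee; rewrite inE f_injb; case: eqP => //= fe.
  by case/negP: x_notin; rewrite -fe; apply: imset_f.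
Qed.

Definition relabel (f0 : FF) (s : {perm V}) : FF := [ffun w => f0 (s w)].

Lemma relabel_inj (f0 : FF) : injective f0 -> injective (relabel f0).
Proof.
move=> f0_inj s t /ffunP st; apply/permP => w.
by apply: f0_inj; have := st w; rewrite !ffunE.
Qed.

Lemma copy_relabel (f0 : FF) (s : {perm V}) :
  copy (relabel f0 s) = [set f0 @: e | e : {set V} in [set s @: e | e : {set V} in E]].
Proof.
rewrite /copy -imset_comp; apply: eq_imset => e /=; rewrite -imset_comp.
by apply: eq_imset => w; rewrite ffunE.
Qed.

Hypothesis no_isolated : forall w, exists2 e, e \in E & w \in e.

Lemma copy_eq_relabel (f0 f : FF) : injective f0 -> injective f -> copy f = copy f0 ->
  exists s, f = relabel f0 s.
Proof.
move=> f0_inj f_inj copy_f.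
have f_in_f0 w : exists w', f0 w' == f w.
  have [e Ee we] := no_isolated w.
  have : f @: e \in copy f0 by rewrite -copy_f; apply: imset_f.
  case/imsetP => e' _ fe; have : f w \in f @: e by apply: imset_f.
  by rewrite fe => /imsetP [w' _ ->]; exists w'.
pose s w := xchoose (f_in_f0 w).
have f0s w : f0 (s w) = f w := eqP (xchooseP (f_in_f0 w)).
have s_inj : injective s by move=> a b sab; apply: f_inj; rewrite -!f0s sab.
by exists (perm s_inj); apply/ffunP => w; rewrite !ffunE permE f0s.
Qed.

Lemma card_copy_fiber (f0 : FF) : injective f0 ->
  #|[set f : FF | injectiveb f && (copy f == copy f0)]| = aut_card E.
Proof.
move=> f0_inj; rewrite /aut_card -(card_imset _ (relabel_inj f0_inj)).
apply: eq_card => f; rewrite !inE; apply/idP/imsetP.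
- move=> /andP [/injectiveP f_inj /eqP copy_f].
  have [s fE] := copy_eq_relabel f0_inj f_inj copy_f; subst f.
  exists s => //; rewrite inE; move: copy_f; rewrite copy_relabel => /esym copy_s.
  have sE : [set s @: e | e : {set V} in E] \subset E.
    apply/subsetP => _ /imsetP [e Ee ->].
    have : f0 @: (s @: e) \in copy f0 by rewrite copy_s; apply: imset_f; apply: imset_f.
    by case/imsetP => e' Ee' /(imset_inj f0_inj) ->.
  by rewrite eqEcard sE card_imset ?leqnn //; exact: (imset_inj (@perm_inj _ s)).
- case=> s; rewrite inE => /eqP s_aut ->.
  apply/andP; split; first by apply/injectiveP => a b; rewrite !ffunE => /f0_inj /perm_inj.
  by rewrite copy_relabel s_aut.
Qed.

Lemma GH_deg_mul_aut (x : {set 'I_n}) : is_graph E -> #|x| = 2 ->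
  GH_deg E x * aut_card E = #|E| * (2 * n.-2 ^_ #|V|.-2).
Proof.
move=> graphE x2; rewrite -(card_inj_copy_mem graphE x2) -sum1_card.
rewrite (partition_big_imset copy) /GH_deg -sum_nat_const.
have -> : copy @: [set f : FF | injectiveb f && (x \in copy f)]
          = [set S in GH_edges E n | x \in S].
  apply/setP => S; rewrite [in RHS]inE; apply/imsetP/andP.
  - case=> f; rewrite inE => /andP [/injectiveP f_inj xf] ->.
    by split=> //; apply/GH_edgesP; exists f.
  - case=> /GH_edgesP [f f_inj ->] xf.
    by exists f => //; rewrite inE xf andbT; apply/injectiveP.
apply: eq_bigr => S; rewrite inE => /andP [/GH_edgesP [f0 f0_inj ->] x_f0].
rewrite sum1_card -(card_copy_fiber f0_inj); apply: eq_card => f.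
by rewrite [in RHS]unfold_in /= !inE; case: eqP => [-> | _]; rewrite ?x_f0 ?andbT ?andbF.
Qed.

End Copies.

Lemma leq_expn2r m1 m2 e : m1 <= m2 -> m1 ^ e <= m2 ^ e.
Proof. by move=> m12; elim: e => [|e IHe]; rewrite ?expn0 // !expnS leq_mul. Qed.

Section MapsWithLargePreimage.
Variables (V : finType) (n : nat).
Local Notation FF := {ffun V -> 'I_n}.

Lemma card_ffun_maps_into (W : {set V}) (U : {set 'I_n}) :
  #|[set f : FF | [forall w in W, f w \in U]]| = #|U| ^ #|W| * n ^ (#|V| - #|W|).
Proof.
pose F w := [pred y : 'I_n | (w \in W) ==> (y \in U)].
have -> : #|[set f : FF | [forall w in W, f w \in U]]| = foldr muln 1 [seq #|F w| | w : V].
  rewrite -card_family; apply: eq_card => f; rewrite inE.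
  by apply/forallP/familyP => fWU w; have := fWU w; rewrite !inE.
rewrite foldrE big_map big_enum /= (bigID (mem W)) /=.
rewrite (eq_bigr (fun _ => #|U|)) => [|w wW]; last by apply: eq_card => y; rewrite !inE wW.
rewrite [X in _ * X](eq_bigr (fun _ => n)) => [|w wW]; last first.
  by rewrite -[n in RHS]card_ord; apply: eq_card => y; rewrite !inE (negbTE wW).
rewrite !prod_nat_const -(cardsC W) addKn; congr (_ ^ _ * _ ^ _).
by apply: eq_card => w; rewrite !inE.
Qed.

Lemma card_ffun_preimage_ge (U : {set 'I_n}) (m : nat) : 0 < n ->
  #|[set f : FF | m <= #|[set w | f w \in U]|]|
  <= 2 ^ #|V| * (#|U|.+1 ^ #|V| * n ^ (#|V| - m)).
Proof.
move=> n0; pose maps_into (W : {set V}) := [set f : FF | [forall w in W, f w \in U]].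
apply: (@leq_trans (\sum_(W : {set V} | m <= #|W|) #|maps_into W|)).
  rewrite card_sum_indicator.
  apply: (@leq_trans (\sum_(f : FF) \sum_(W : {set V} | m <= #|W|) (f \in maps_into W : nat))).
    apply: leq_sum => f _; rewrite inE.
    have [preim_ge | //] := boolP (m <= #|[set w | f w \in U]|).
    rewrite (bigD1 [set w | f w \in U]) //= inE.
    have -> // : [forall w in [set w | f w \in U], f w \in U].
    by apply/forall_inP => w; rewrite inE.
  by rewrite exchange_big /=; apply: leq_sum => W _; rewrite card_sum_indicator.
have card_sets : #|{: {set V}}| = 2 ^ #|V|.
  by rewrite -cardsT -card_powerset; apply: eq_card => W; rewrite !inE subsetT.
rewrite -card_sets -sum_nat_const [X in _ <= X](bigID (fun W : {set V} => m <= #|W|)) /=.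
apply: leq_trans (leq_addr _ _); apply: leq_sum => W mW.
rewrite card_ffun_maps_into; apply: leq_mul.
  apply: (@leq_trans (#|U|.+1 ^ #|W|)); first exact: leq_expn2r.
  exact: leq_pexp2l (max_card _).
by apply: leq_pexp2l => //; apply: leq_sub2l.
Qed.

End MapsWithLargePreimage.

Lemma leq_card_preim (aT rT : finType) (f : aT -> rT) (U : {set rT}) :
  U \subset f @: setT -> #|U| <= #|[set w | f w \in U]|.
Proof.
move=> sU; apply: leq_trans (leq_imset_card f _); apply: subset_leq_card.
apply/subsetP => y Uy; have /imsetP [w _ yE] := subsetP sU y Uy.
by apply/imsetP; exists w; rewrite // inE -yE.
Qed.

Lemma card_cover_Kedges n (S : {set {set 'I_n}}) :
  S \subset Kedges n -> #|cover S| <= 2 * #|S|.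
Proof.
move=> SK; apply: leq_trans (leq_card_cover S).1 _.
rewrite mulnC -sum_nat_const; apply: leq_sum => y Sy.
by have := subsetP SK y Sy; rewrite inE => /eqP ->.
Qed.

Section UpperBounds.
Variables (V : finType) (E : {set {set V}}).
Hypothesis graphE : is_graph E.
Hypothesis balE : strictly_2_balanced E.

Lemma card_GH_edges_le n (P : pred {set {set 'I_n}}) :
  #|[set T in GH_edges E n | P T]|
  <= #|[set f : {ffun V -> 'I_n} | injectiveb f && P (copy E f)]|.
Proof.
apply: (leq_trans _ (leq_imset_card (@copy V E n) _)); apply: subset_leq_card.
apply/subsetP => T; rewrite inE => /andP [/GH_edgesP [f f_inj ->] PT].
by apply/imsetP; exists f; rewrite // inE PT andbT; apply/injectiveP.
Qed.

Lemma cover_copy_preim_ge n (f : {ffun V -> 'I_n}) (U : {set 'I_n}) :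
  U \subset cover (copy E f) -> #|U| <= #|[set w | f w \in U]|.
Proof.
move=> sU; apply: leq_card_preim; apply: subset_trans sU _.
apply/subsetP => y /bigcupP [_ /imsetP [e _ ->] /imsetP [w _ ->]].
exact: imset_f.
Qed.

Definition max_uncovered l :=
  \max_(D : {set {set V}} | (D \subset E) && (#|D| == l)) (#|V| - #|cover D|).

Lemma max_uncovered_le l : max_uncovered l <= #|V|.
Proof. by apply/bigmax_leqP => D _; apply: leq_subr. Qed.

Lemma max_uncovered_density_lt l : 2 <= l <= #|E| - 1 ->
  max_uncovered l * (#|E| - 1) < (#|V| - 2) * (#|E| - l).
Proof.
move=> /andP [l2 lk]; have h3 := card_vertices_ge3 graphE balE.
have k3 := card_edges_ge3 balE.
have [no_D | some_D] := posnP #|[pred D : {set {set V}} | (D \subset E) && (#|D| == l)]|.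
  have -> : max_uncovered l = 0.
    apply/eqP; rewrite -leqn0; apply/bigmax_leqP => D PD.
    by move: (card0_eq no_D D); rewrite !inE PD.
  by rewrite mul0n muln_gt0; apply/andP; split; lia.
have [D0 /andP [sD0E /eqP D0l] D0_max] :=
  eq_bigmax_cond (fun D : {set {set V}} => #|V| - #|cover D|) some_D.
have -> : max_uncovered l = #|V| - #|cover D0| by exact: D0_max.
have sD0 e : e \in D0 -> e \subset cover D0 by move=> D0e; apply: bigcup_sup.
have W3 : 3 <= #|cover D0| by apply: (card_span_ge3 graphE sD0E) => //; lia.
have D0_proper : (cover D0, D0) <> (setT, E) by case=> _ D0E; move: D0l; rewrite D0E; lia.
have := proper_subgraph_density_lt graphE balE sD0E sD0 W3 D0_proper.
rewrite D0l => /(_ ltac:(lia)); move: (max_card (mem (cover D0))) W3 h3 k3 l2 lk.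
by move: #|V| #|E| #|cover D0| => h k c; nia.
Qed.

Lemma GH_maxdeg_le l n : 0 < n ->
  GH_maxdeg E l n <= 2 ^ #|V| * ((2 * l).+1 ^ #|V| * n ^ max_uncovered l).
Proof.
move=> n0; apply/bigmax_leqP => S; rewrite inE => /andP [SK /eqP Sl].
apply: leq_trans (card_GH_edges_le (fun T => S \subset T)) _.
apply: (@leq_trans
  #|[set f : {ffun V -> 'I_n} | #|V| - max_uncovered l <= #|[set w | f w \in cover S]|]|).
  apply: subset_leq_card; apply/subsetP => f; rewrite !inE => /andP [/injectiveP f_inj sS].
  pose D := [set e in E | f @: e \in S].
  have DS : [set f @: e | e : {set V} in D] = S.
    apply/setP => y; apply/imsetP/idP => [[e] | Sy].
      by rewrite inE => /andP [_ ?] ->.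
    have /imsetP [e Ee ye] := subsetP sS y Sy.
    by exists e => //; rewrite inE Ee -ye Sy.
  have Dl : #|D| = l by rewrite -Sl -DS card_imset //; apply: imset_inj.
  have D_uncov : #|V| - #|cover D| <= max_uncovered l.
    apply: (@leq_bigmax_cond _ _ (fun D1 => #|V| - #|cover D1|) D).
    by rewrite Dl eqxx andbT; apply/subsetP => e; rewrite inE => /andP [].
  have cover_D : #|cover D| <= #|[set w | f w \in cover S]|.
    apply: subset_leq_card; apply/subsetP => w /bigcupP [e De we]; rewrite inE.
    by apply/bigcupP; exists (f @: e); [rewrite -DS; apply: imset_f | apply: imset_f].
  by rewrite leq_subCl in D_uncov; exact: leq_trans D_uncov cover_D.
apply: (leq_trans (card_ffun_preimage_ge V _ _ n0)).
rewrite subKn ?max_uncovered_le // leq_mul // leq_mul // leq_expn2r // ltnS -Sl.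
exact: card_cover_Kedges.
Qed.

Lemma edge_covered_by_rest n (S : {set {set 'I_n}}) (x' : {set 'I_n}) :
  S :|: [set x'] \in GH_edges E n -> x' \subset cover S.
Proof.
case/GH_edgesP => g g_inj copy_g.
have : x' \in copy E g by rewrite -copy_g !inE eqxx orbT.
case/imsetP => e' Ee' x'E; rewrite x'E in copy_g *.
apply/subsetP => _ /imsetP [w we' ->].
have [e'' Ee'' /andP [e''e' we'']] := vertex_in_other_edge graphE balE Ee' we'.
have : g @: e'' \in S :|: [set g @: e'].
  by rewrite copy_g; apply: imset_f.
rewrite !inE (inj_eq (imset_inj g_inj)) (negbTE e''e') orbF => Sge''.
by apply/bigcupP; exists (g @: e''); last exact: imset_f.
Qed.

Lemma card_Gamma_witnesses_le n (x x' : {set 'I_n}) :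
  #|[set S : {set {set 'I_n}} | [&& S \subset Kedges n, #|S| == #|E|.-1,
       (S :|: [set x]) \in GH_edges E n & (S :|: [set x']) \in GH_edges E n]]|
  <= #|[set T in GH_edges E n | x :|: x' \subset cover T]|.
Proof.
apply: (leq_trans _ (leq_imset_card (fun T => T :\ x) _)); apply: subset_leq_card.
apply/subsetP => S; rewrite inE => /and4P [_ /eqP Sk TxE Tx'E].
have x_notin : x \notin S.
  apply: contraTN TxE => xS; apply/negP => /GH_edgesP [f f_inj copy_f].
  have := card_copy E f_inj; rewrite -copy_f (setUidPl _) ?sub1set // Sk.
  by have := card_edges_ge3 balE; lia.
apply/imsetP; exists (S :|: [set x]); last by rewrite setUC setU1K.
have coverU : cover (S :|: [set x]) = cover S :|: x by rewrite /cover bigcup_setU big_set1.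
rewrite inE TxE coverU subUset subsetUr /=.
exact: subset_trans (edge_covered_by_rest Tx'E) (subsetUl _ _).
Qed.

Lemma GH_Gamma_le n : 0 < n -> GH_Gamma E n <= 2 ^ #|V| * (5 ^ #|V| * n ^ (#|V| - 3)).
Proof.
move=> n0; apply/bigmax_leqP => [[x x']] /=; rewrite !inE => /and3P [/eqP x2 /eqP x'2 xx'].
have /andP [U3 U4] := card_setU_card2 x2 x'2 xx'.
apply: leq_trans (card_Gamma_witnesses_le x x') _.
apply: leq_trans (card_GH_edges_le _) _.
apply: (@leq_trans #|[set f : {ffun V -> 'I_n} | 3 <= #|[set w | f w \in x :|: x']|]|).
  apply: subset_leq_card; apply/subsetP => f; rewrite !inE => /andP [_ sU].
  exact: leq_trans U3 (cover_copy_preim_ge sU).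
apply: (leq_trans (card_ffun_preimage_ge V _ _ n0)).
by rewrite leq_mul // leq_mul // leq_expn2r.
Qed.

End UpperBounds.

Lemma expn_sub_le_ffact n m : (n - m) ^ m <= n ^_ m.
Proof.
elim: m => [|m IHm]; first by rewrite ffactn0.
rewrite ffactnSr expnS mulnC leq_mul //; last lia.
by apply: leq_trans IHm; apply: leq_expn2r; lia.
Qed.

Lemma expn_le_ffact n h : 2 <= h -> 2 * h <= n ->
  n ^ (h - 2) <= 2 ^ (h - 2) * (n - 2) ^_ (h - 2).
Proof.
move=> h2 hn; apply: (@leq_trans ((2 * ((n - 2) - (h - 2))) ^ (h - 2))).
  by apply: leq_expn2r; lia.
by rewrite expnMn leq_mul // expn_sub_le_ffact.
Qed.

Lemma aut_card_gt0 (V : finType) (E : {set {set V}}) : 0 < aut_card E.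
Proof.
rewrite card_gt0; apply/set0Pn; exists 1%g; rewrite inE.
have perm1_imset (e : {set V}) : (1%g : {perm V}) @: e = e.
  by rewrite -[RHS]imset_id; apply: eq_imset => w; rewrite perm1.
by rewrite (eq_imset _ perm1_imset) imset_id.
Qed.

Section Asymptotics.
Local Open Scope R_scope.

Lemma Rpower_gt0 x y : 0 < Rpower x y.
Proof. exact: exp_pos. Qed.

Lemma little_o_pow_Rpower (b : nat) (r : R) : INR b < r ->
  little_o (fun n => INR n ^ b) (fun n => Rpower (INR n) r).
Proof.
move=> br eps eps0; set d := r - INR b.
have [N N_large] := INR_unbounded (Rpower (/ eps) (/ d)).
exists (maxn N 1) => n; rewrite geq_max => /andP [Nn n1].
have n0 : 0 < INR n by apply: lt_0_INR; apply/ssrnat.ltP.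
have large : / eps <= Rpower (INR n) d.
  rewrite -[/ eps]Rpower_1; last exact: Rinv_0_lt_compat.
  rewrite -(Rinv_l d); last by rewrite /d; lra.
  rewrite -Rpower_mult; apply: Rle_Rpower_l; first by rewrite /d; lra.
  split; first exact: Rpower_gt0.
  by apply: Rle_trans (Rlt_le _ _ N_large) _; apply: le_INR; apply/ssrnat.leP.
rewrite Rabs_pos_eq; last by apply: pow_le; lra.
rewrite Rabs_pos_eq; last exact: Rlt_le (Rpower_gt0 _ _).
have -> : r = INR b + d by rewrite /d; ring.
rewrite Rpower_plus Rpower_pow //.
have pow0 : 0 < INR n ^ b by apply: pow_lt.
have : 1 <= eps * Rpower (INR n) d.
  by rewrite -(Rinv_r eps); [apply: Rmult_le_compat_l; lra | lra].
nra.
Qed.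

Lemma little_o_le (f f' g g' : nat -> R) (C c : R) (N : nat) : 0 <= C -> 0 < c ->
  (forall n, (N <= n)%N -> Rabs (f n) <= C * Rabs (f' n)) ->
  (forall n, (N <= n)%N -> c * Rabs (g' n) <= Rabs (g n)) ->
  little_o f' g' -> little_o f g.
Proof.
move=> C0 c0 ff' gg' o_f'g' eps eps0.
have [M HM] := o_f'g' (eps * c / (C + 1)) ltac:(apply: Rdiv_lt_0_compat; nra).
exists (maxn N M) => n; rewrite geq_max => /andP [Nn Mn].
have := ff' n Nn; have := gg' n Nn; have := HM n Mn.
have := Rabs_pos (f' n); have := Rabs_pos (g' n).
set a := Rabs (f' n); set b := Rabs (g' n); set e' := eps * c / (C + 1).
have e'E : e' * (C + 1) = eps * c by rewrite /e'; field; lra.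
nra.
Qed.

End Asymptotics.

Section DeltaAsymptotics.
Local Open Scope R_scope.

Lemma INR_expn (m e : nat) : INR (m ^ e)%N = INR m ^ e.
Proof. by elim: e => [|e IHe] //; rewrite expnS mult_INR IHe. Qed.

Lemma Rpower_mult_pow_le (c x D a : R) (M : nat) : 0 < c -> 0 < x -> 0 <= a ->
  c * x ^ M <= D -> Rpower c a * Rpower x (INR M * a) <= Rpower D a.
Proof.
move=> c0 x0 a0 cxD; have xM0 : 0 < x ^ M by apply: pow_lt.
rewrite -Rpower_mult Rpower_pow // Rpower_mult_distr //.
by apply: Rle_Rpower_l => //; split; [nra | exact: cxD].
Qed.

Variables (V : finType) (E : {set {set V}}).

Lemma GH_Delta_ge n : (2 <= #|V|)%N -> (0 < #|E|)%N -> (2 * #|V| <= n)%N ->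
  / INR (2 ^ (#|V| - 2) * aut_card E) * INR n ^ (#|V| - 2) <= GH_Delta E n.
Proof.
move=> h2 k0 hn; rewrite /GH_Delta -INR_expn mult_INR.
set x := INR (n ^ _); set A := INR (2 ^ _); set a := INR (aut_card E).
set cn := INR (2 * #|E| * _).
have a0 : 0 < a by apply: lt_0_INR; apply/ssrnat.ltP; exact: aut_card_gt0.
have A0 : 0 < A by apply: lt_0_INR; apply/ssrnat.ltP; rewrite expn_gt0.
have x_le : x <= A * cn.
  rewrite /x /A /cn -mult_INR; apply: le_INR; apply/ssrnat.leP.
  apply: leq_trans (expn_le_ffact h2 hn) _; rewrite leq_mul // leq_pmull //.
  by rewrite muln_gt0.
have -> : / (A * a) * x = (x / A) / a by field; lra.
apply: Rmult_le_compat_r; first by apply/Rlt_le/Rinv_0_lt_compat.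
apply: (Rmult_le_reg_r A) => //; rewrite /Rdiv Rmult_assoc Rinv_l; lra.
Qed.

End DeltaAsymptotics.

Section Parts.
Local Open Scope R_scope.
Variables (V : finType) (E : {set {set V}}).
Hypothesis graphE : is_graph E.
Hypothesis balE : strictly_2_balanced E.

Lemma GH_deg_eq_Delta n (x : {set 'I_n}) : x \in Kedges n -> INR (GH_deg E x) = GH_Delta E n.
Proof.
rewrite inE => /eqP x2.
have := GH_deg_mul_aut (vertex_in_edge graphE balE) graphE x2.
rewrite mulnCA mulnA /GH_Delta !subn2 => <-.
have a0 : 0 < INR (aut_card E) by apply: lt_0_INR; apply/ssrnat.ltP; exact: aut_card_gt0.
by rewrite mult_INR; field; lra.
Qed.

Let c0 := / INR (2 ^ (#|V| - 2) * aut_card E).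

Lemma c0_gt0 : 0 < c0.
Proof.
apply: Rinv_0_lt_compat; apply: lt_0_INR; apply/ssrnat.ltP.
by rewrite muln_gt0 expn_gt0 aut_card_gt0.
Qed.

Lemma GH_Delta_ge_c0 n : (2 * #|V| <= n)%N -> c0 * INR n ^ (#|V| - 2) <= GH_Delta E n.
Proof.
move=> hn; have h3 := card_vertices_ge3 graphE balE; have k3 := card_edges_ge3 balE.
by apply: GH_Delta_ge; lia.
Qed.

Lemma GH_maxdeg_little_o l : (2 <= l <= #|E| - 1)%N ->
  little_o (fun n => INR (GH_maxdeg E l n))
           (fun n => Rpower (GH_Delta E n) (INR (#|E| - l) / INR (#|E| - 1))).
Proof.
move=> l_range; have /andP [l2 lk] := l_range; have k3 := card_edges_ge3 balE.
set a := INR (#|E| - l) / INR (#|E| - 1).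
have k1 : 0 < INR (#|E| - 1) by apply: lt_0_INR; apply/ssrnat.ltP; lia.
have a0 : 0 < a by apply: Rdiv_lt_0_compat => //; apply: lt_0_INR; apply/ssrnat.ltP; lia.
apply: (little_o_le (f' := fun n => INR n ^ max_uncovered E l)
          (g' := fun n => Rpower (INR n) (INR (#|V| - 2) * a))
          (C := INR (2 ^ #|V| * (2 * l).+1 ^ #|V|)) (c := Rpower c0 a) (N := 2 * #|V|)).
- exact: pos_INR.
- exact: Rpower_gt0.
- move=> n hn; rewrite !Rabs_pos_eq; [| exact: pow_le (pos_INR n) | exact: pos_INR].
  have n0 : (0 < n)%N by have := card_vertices_ge3 graphE balE; lia.
  have /ssrnat.leP/le_INR := GH_maxdeg_le E l n0.
  by rewrite !mult_INR !INR_expn Rmult_assoc.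
- move=> n hn; rewrite !Rabs_pos_eq; try exact: Rlt_le (Rpower_gt0 _ _).
  apply: Rpower_mult_pow_le; [exact: c0_gt0 | | lra | ].
  + by apply: lt_0_INR; apply/ssrnat.ltP; have := card_vertices_ge3 graphE balE; lia.
  + exact: GH_Delta_ge_c0.
- apply: little_o_pow_Rpower; apply: (Rmult_lt_reg_r (INR (#|E| - 1))) => //.
  rewrite /a Rmult_assoc /Rdiv Rmult_assoc Rinv_l ?Rmult_1_r; last lra.
  rewrite -!mult_INR; apply: lt_INR; apply/ssrnat.ltP.
  exact: max_uncovered_density_lt graphE balE _ l_range.
Qed.

Lemma GH_Gamma_little_o : little_o (fun n => INR (GH_Gamma E n)) (fun n => GH_Delta E n).
Proof.
have h3 := card_vertices_ge3 graphE balE.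
apply: (little_o_le (f' := fun n => INR n ^ (#|V| - 3))
          (g' := fun n => Rpower (INR n) (INR (#|V| - 2)))
          (C := INR (2 ^ #|V| * 5 ^ #|V|)) (c := c0) (N := 2 * #|V|)).
- exact: pos_INR.
- exact: c0_gt0.
- move=> n hn; rewrite !Rabs_pos_eq; [| exact: pow_le (pos_INR n) | exact: pos_INR].
  have /ssrnat.leP/le_INR := GH_Gamma_le graphE balE (ltac:(lia) : (0 < n)%N).
  by rewrite !mult_INR !INR_expn Rmult_assoc.
- move=> n hn; have n0 : 0 < INR n by apply: lt_0_INR; apply/ssrnat.ltP; lia.
  have Delta_ge := GH_Delta_ge_c0 hn; have pow0 := pow_lt _ (#|V| - 2) n0.
  have c00 := c0_gt0.
  rewrite Rpower_pow // !Rabs_pos_eq; nra.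
- by apply: little_o_pow_Rpower; apply: lt_INR; apply/ssrnat.ltP; lia.
Qed.

End Parts.

Theorem mainTheorem19 (V : finType) (E : {set {set V}}) :
  is_graph E -> strictly_2_balanced E ->
  (forall n : nat, #|V| <= n -> forall x : {set 'I_n}, x \in Kedges n ->
     INR (GH_deg E x) = GH_Delta E n) /\
  (forall l : nat, 2 <= l <= #|E| - 1 ->
     little_o (fun n => INR (GH_maxdeg E l n))
              (fun n => Rpower (GH_Delta E n)
                               (Rdiv (INR (#|E| - l)) (INR (#|E| - 1))))) /\
  little_o (fun n => INR (GH_Gamma E n)) (fun n => GH_Delta E n).
Proof.
move=> graphE balE; split; last split.
-
  by move=> n _ x; apply: GH_deg_eq_Delta.
- exact: GH_maxdeg_little_o.
- exact: GH_Gamma_little_o.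
Qed.
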